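(* Let $E=(L^0)^{\mathbb N}$ be the $L^0$-module of all sequences $(x_n)_{n\in\mathbb N}$ in $L^0$, and let $\mathscr P=\{p_k:k\in\mathbb N\}$ with $p_k((x_n))=|x_k|$. Let $E^*_0$ be the set of $L^0$-linear maps $f:E\to L^0$ which are continuous from $(E,\mathscr T_0(\mathscr P))$ to $(L^0,\mathscr T_0(\{|\cdot|\}))$. Then a map $f:E\to L^0$ belongs to $E^*_0$ if and only if there exist $m\in\mathbb N$ and $x_1,\dots,x_m\in L^0$ such that $f((y_n))=\sum_{n=1}^m x_ny_n$ for all $(y_n)\in E$.
   Context: $L^0$ is the ring of real-valued measurable functions on a probability space modulo a.e. equality, ordered a.e.; $L^0_{++}=\{r\in L^0:r>0\text{ a.e.}\}$. For a collection $\mathscr P$ of $L^0$-seminorms (maps $p:E\to L^0_+$ with $p(rx)=|r|p(x)$, $p(x+y)\le p(x)+p(y)$) on an $L^0$-module $E$, $\mathscr T_0(\mathscr P)$ is the topology generated by the base of sets $\{y\in E:\sup_{p\in N}p(x-y)<r\}$ with $x\in E$, $N\subset\mathscr P$ finite, $r\in L^0_{++}$. On $L^0$, $\mathscr T_0(\{|\cdot|\})$ is the topology with base $\{s\in L^0:|s-t|<r\}$, $t\in L^0$, $r\in L^0_{++}$. *)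

From Stdlib Require Import Reals List.
Open Scope R_scope.

Section ProbSpace.
Variable Omega : Type.

Definition is_sigma_algebra (F : (Omega -> Prop) -> Prop) : Prop :=
  F (fun _ => True) /\
  (forall A, F A -> F (fun w => ~ A w)) /\
  (forall A : nat -> Omega -> Prop, (forall n, F (A n)) -> F (fun w => exists n, A n w)).

Definition is_prob_space (F : (Omega -> Prop) -> Prop) (P : (Omega -> Prop) -> R) : Prop :=
  is_sigma_algebra F /\
  (forall A, F A -> 0 <= P A) /\
  P (fun _ => True) = 1 /\
  (forall A : nat -> Omega -> Prop,
      (forall n, F (A n)) ->
      (forall n m w, n <> m -> A n w -> A m w -> False) ->
      infinite_sum (fun n => P (A n)) (P (fun w => exists n, A n w))).

Variables (F : (Omega -> Prop) -> Prop) (P : (Omega -> Prop) -> R).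

(** real-valued measurable functions (representatives of elements of L^0) *)
Definition measurable (X : Omega -> R) : Prop := forall a : R, F (fun w => X w <= a).

Definition ae (Q : Omega -> Prop) : Prop :=
  exists N, F N /\ P N = 0 /\ forall w, ~ N w -> Q w.

(** equality in L^0 (a.e. equality of representatives) *)
Definition ae_eq (X Y : Omega -> R) : Prop := ae (fun w => X w = Y w).

Definition in_E (x : nat -> Omega -> R) : Prop := forall n, measurable (x n).

Definition L0pp (r : Omega -> R) : Prop := measurable r /\ ae (fun w => 0 < r w).

Definition pk (k : nat) (x : nat -> Omega -> R) : Omega -> R := fun w => Rabs (x k w).

(** sup_{p in N} p(z) for a finite set N of indices (0 if N is empty) *)
Definition supP (N : list nat) (z : nat -> Omega -> R) : Omega -> R :=
  fun w => fold_right Rmax 0 (map (fun k => pk k z w) N).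

Definition seq_sub (x y : nat -> Omega -> R) : nat -> Omega -> R :=
  fun n w => x n w - y n w.

Definition ballE (x : nat -> Omega -> R) (N : list nat) (r : Omega -> R)
  (y : nat -> Omega -> R) : Prop :=
  ae (fun w => supP N (seq_sub x y) w < r w).

Definition openE (U : (nat -> Omega -> R) -> Prop) : Prop :=
  forall y, in_E y -> U y ->
    exists x N r, in_E x /\ L0pp r /\ ballE x N r y /\
      (forall z, in_E z -> ballE x N r z -> U z).

Definition ballL (t r s : Omega -> R) : Prop :=
  ae (fun w => Rabs (s w - t w) < r w).

Definition openL (V : (Omega -> R) -> Prop) : Prop :=
  forall s, measurable s -> V s ->
    exists t r, measurable t /\ L0pp r /\ ballL t r s /\
      (forall u, measurable u -> ballL t r u -> V u).

(** f : E -> L^0 is a well-defined map (on a.e.-classes) *)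
Definition is_map_E_L0 (f : (nat -> Omega -> R) -> Omega -> R) : Prop :=
  (forall x, in_E x -> measurable (f x)) /\
  (forall x y, in_E x -> in_E y -> (forall n, ae_eq (x n) (y n)) -> ae_eq (f x) (f y)).

Definition L0_linear (f : (nat -> Omega -> R) -> Omega -> R) : Prop :=
  (forall (r : Omega -> R) x, measurable r -> in_E x ->
     ae_eq (f (fun n w => r w * x n w)) (fun w => r w * f x w)) /\
  (forall x y, in_E x -> in_E y ->
     ae_eq (f (fun n w => x n w + y n w)) (fun w => f x w + f y w)).

Definition continuous_T0 (f : (nat -> Omega -> R) -> Omega -> R) : Prop :=
  forall V, openL V -> openE (fun y => V (f y)).

Definition in_Estar0 (f : (nat -> Omega -> R) -> Omega -> R) : Prop :=
  L0_linear f /\ continuous_T0 f.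

Fixpoint fsum (m : nat) (g : nat -> R) : R :=
  match m with O => 0 | S m' => fsum m' g + g m' end.

End ProbSpace.

From Stdlib Require Import ZArith Reals List Lra Lia Classical FunctionalExtensionality PropExtensionality ClassicalEpsilon.
Open Scope R_scope.

(* Continuity at [0] yields a basic neighbourhood of [0] mapped into the unit ball of
   [L^0]; it restricts only the coordinates in a finite set [N].  Every multiple [c z]
   of a sequence [z] vanishing on [{0, ..., m-1}] (with [N] below [m]) lies in it, so
   [|c f z| < 1] for all [c], i.e. [f z = 0].  Linearity then gives
   [f y = sum_{n<m} f(e_n) y_n].  Conversely such a finite sum is [L^0]-linear, and
   continuous because [|sum x_n (y_n - z_n)| <= (sum |x_n|) max_{n<m} |y_n - z_n|],
   which is small on a ball of the measurable radius [(r - |f y - t|) / (1 + sum |x_n|)]. *)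

Lemma inv_INR_S_pos (n : nat) : 0 < / INR (S n).
Proof. apply Rinv_0_lt_compat, lt_0_INR, Nat.lt_0_succ. Qed.

Lemma exists_inv_INR_S_lt (g : R) : 0 < g -> exists n : nat, / INR (S n) < g.
Proof.
  intros Hg. destruct (archimed_cor1 g Hg) as [N [HN HN0]].
  exists (pred N). now rewrite (Nat.succ_pred_pos N HN0).
Qed.

Lemma exists_ratio_between (x g : R) : 0 < g ->
  exists (j : nat) (z : Z), x < IZR z / INR (S j) < x + g.
Proof.
  intros Hg. destruct (exists_inv_INR_S_lt g Hg) as [j Hj].
  exists j, (up (x * INR (S j))).
  set (d := INR (S j)) in *.
  assert (Hd : 0 < d) by apply lt_0_INR, Nat.lt_0_succ.
  destruct (archimed (x * d)) as [Hup1 Hup2].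
  assert (E : IZR (up (x * d)) / d = x + (IZR (up (x * d)) - x * d) / d) by (field; lra).
  rewrite E.
  assert (Hpos : 0 < (IZR (up (x * d)) - x * d) / d) by (apply Rdiv_lt_0_compat; lra).
  assert (Hle : (IZR (up (x * d)) - x * d) / d <= / d).
  { rewrite <- (Rmult_1_l (/ d)). apply Rmult_le_compat_r; [apply Rlt_le, Rinv_0_lt_compat|]; lra. }
  lra.
Qed.

Lemma eq0_of_scaled_lt1 (a : R) : (forall j : nat, Rabs (INR (S j) * a) < 1) -> a = 0.
Proof.
  intros H. destruct (Req_dec a 0) as [|Ha]; auto. exfalso.
  apply Rabs_pos_lt in Ha. destruct (exists_inv_INR_S_lt _ Ha) as [j Hj].
  specialize (H j). rewrite Rabs_mult, (Rabs_pos_eq (INR (S j))) in H by apply pos_INR.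
  assert (Hd : 0 < INR (S j)) by apply lt_0_INR, Nat.lt_0_succ.
  apply Rmult_lt_compat_l with (r := INR (S j)) in Hj; auto.
  rewrite Rinv_r in Hj by lra. lra.
Qed.

Lemma pred_ext (T : Type) (A B : T -> Prop) : (forall w, A w <-> B w) -> A = B.
Proof.
  intros H; apply functional_extensionality; intro w; apply propositional_extensionality; auto.
Qed.

Lemma infinite_sum_const_eq0 (c l : R) : infinite_sum (fun _ => c) l -> c = 0.
Proof.
  intros H. destruct (Req_dec c 0) as [|Hc]; auto. exfalso.
  apply Rabs_pos_lt in Hc.
  destruct (H (Rabs c / 2)) as [N HN]; [lra|].
  pose proof (HN N (Nat.le_refl N)) as H1. pose proof (HN (S N) (Nat.le_succ_diag_r N)) as H2.
  unfold Rdist in H1, H2. simpl in H2.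
  pose proof (Rabs_triang (sum_f_R0 (fun _ => c) N + c - l) (- (sum_f_R0 (fun _ => c) N - l)))
    as Htri.
  rewrite Rabs_Ropp in Htri. replace (_ + _ - l + - _) with c in Htri by ring. lra.
Qed.

Lemma infinite_sum_eventually (u : nat -> R) (l : R) (N : nat) :
  (forall n, (N <= n)%nat -> sum_f_R0 u n = l) -> infinite_sum u l.
Proof.
  intros H eps Heps. exists N. intros n Hn. unfold Rdist.
  rewrite H, Rminus_diag, Rabs_R0 by exact Hn. exact Heps.
Qed.

Lemma fsum_ext m g h : (forall n, (n < m)%nat -> g n = h n) -> fsum m g = fsum m h.
Proof.
  induction m as [|m IH]; intro H; simpl; auto.
  rewrite IH, H; auto; intros; apply H; lia.
Qed.

Lemma fsum_scal m c g : fsum m (fun n => c * g n) = c * fsum m g.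
Proof. induction m as [|m IH]; simpl; [ring | rewrite IH; ring]. Qed.

Lemma fsum_plus m g h : fsum m (fun n => g n + h n) = fsum m g + fsum m h.
Proof. induction m as [|m IH]; simpl; [ring | rewrite IH; ring]. Qed.

Lemma fsum_nonneg m g : (forall n, 0 <= g n) -> 0 <= fsum m g.
Proof. intro H; induction m as [|m IH]; simpl; [lra | specialize (H m); lra]. Qed.

Lemma fsum_mult_dist_le m a b c M : (forall n, (n < m)%nat -> Rabs (b n - c n) <= M) ->
  Rabs (fsum m (fun n => a n * b n) - fsum m (fun n => a n * c n))
    <= fsum m (fun n => Rabs (a n)) * M.
Proof.
  induction m as [|m IH]; intro H; simpl.
  - rewrite Rminus_diag, Rabs_R0. lra.
  - pose proof (IH (fun n Hn => H n ltac:(lia))) as IHm.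
    pose proof (H m ltac:(lia)) as Hm.
    replace (_ + a m * b m - _) with
      ((fsum m (fun n => a n * b n) - fsum m (fun n => a n * c n)) + a m * (b m - c m)) by ring.
    eapply Rle_trans; [apply Rabs_triang|]. rewrite Rabs_mult.
    pose proof (Rmult_le_compat_l (Rabs (a m)) _ _ (Rabs_pos (a m)) Hm). lra.
Qed.

Lemma fsum_mult_dist_lt m a b c t d :
  Rabs (fsum m (fun n => a n * b n) - t) < d ->
  (forall n, (n < m)%nat -> Rabs (b n - c n) <=
     (d - Rabs (fsum m (fun n => a n * b n) - t)) / (1 + fsum m (fun n => Rabs (a n)))) ->
  Rabs (fsum m (fun n => a n * c n) - t) < d.
Proof.
  intros Hb Hbc.
  pose proof (fsum_mult_dist_le m a b c _ Hbc) as Hdiff.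
  set (S := fsum m (fun n => Rabs (a n))) in *.
  set (g := d - Rabs (fsum m (fun n => a n * b n) - t)) in *.
  assert (HS : 0 <= S) by (apply fsum_nonneg; intro; apply Rabs_pos).
  assert (Hg : S * (g / (1 + S)) < g).
  { replace (S * (g / (1 + S))) with (g - g / (1 + S)) by (field; lra).
    pose proof (Rdiv_lt_0_compat g (1 + S) ltac:(unfold g; lra) ltac:(lra)). lra. }
  replace (fsum m (fun n => a n * c n) - t) with
    ((fsum m (fun n => a n * c n) - fsum m (fun n => a n * b n))
     + (fsum m (fun n => a n * b n) - t)) by ring.
  eapply Rle_lt_trans; [apply Rabs_triang|].
  rewrite Rabs_minus_sym. unfold g in *. lra.
Qed.

Section SigmaAlgebra.
Variables (Omega : Type) (F : (Omega -> Prop) -> Prop).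
Hypothesis HF : is_sigma_algebra Omega F.

Lemma F_ext A B : F A -> (forall w, A w <-> B w) -> F B.
Proof. intros H E; now rewrite <- (pred_ext _ A B E). Qed.

Lemma F_True : F (fun _ => True).
Proof. apply HF. Qed.

Lemma F_compl A : F A -> F (fun w => ~ A w).
Proof. apply HF. Qed.

Lemma F_cunion (A : nat -> Omega -> Prop) :
  (forall n, F (A n)) -> F (fun w => exists n, A n w).
Proof. apply HF. Qed.

Lemma F_False : F (fun _ => False).
Proof. apply F_ext with (fun _ => ~ True); [apply F_compl, F_True | tauto]. Qed.

Lemma F_cinter (A : nat -> Omega -> Prop) :
  (forall n, F (A n)) -> F (fun w => forall n, A n w).
Proof.
  intros H. apply F_ext with (fun w => ~ exists n, ~ A n w).
  - apply F_compl, F_cunion; intro; apply F_compl, H.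
  - intro w; split.
    + intros Hw n. apply NNPP; intro; apply Hw; eauto.
    + intros Hw [n Hn]; auto.
Qed.

Lemma F_union A B : F A -> F B -> F (fun w => A w \/ B w).
Proof.
  intros HA HB.
  apply F_ext with (fun w => exists n : nat, match n with O => A w | _ => B w end).
  - apply F_cunion; intros [|n]; auto.
  - intro w; split.
    + intros [[|n] H]; auto.
    + intros [H|H]; [exists O | exists 1%nat]; auto.
Qed.

Lemma F_inter A B : F A -> F B -> F (fun w => A w /\ B w).
Proof.
  intros HA HB. apply F_ext with (fun w => ~ (~ A w \/ ~ B w)).
  - apply F_compl, F_union; apply F_compl; auto.
  - intro w; tauto.
Qed.

Lemma F_diff A B : F A -> F B -> F (fun w => A w /\ ~ B w).
Proof. intros; apply F_inter; auto using F_compl. Qed.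

Lemma F_Zunion (A : Z -> Omega -> Prop) :
  (forall z, F (A z)) -> F (fun w => exists z, A z w).
Proof.
  intros H.
  apply F_ext with (fun w => exists n : nat, A (Z.of_nat n) w \/ A (- Z.of_nat n)%Z w).
  - apply F_cunion; intro; apply F_union; auto.
  - intro w; split.
    + intros [n [Hn|Hn]]; eauto.
    + intros [z Hz]. exists (Z.to_nat (Z.abs z)).
      rewrite Z2Nat.id by lia.
      destruct (Z.abs_eq_or_opp z) as [E|E]; rewrite E; [left; exact Hz | right].
      now rewrite Z.opp_involutive.
Qed.

Local Notation meas := (measurable Omega F).

Lemma meas_ext X Y : meas X -> (forall w, X w = Y w) -> meas Y.
Proof. intros H E. now rewrite <- (functional_extensionality X Y E). Qed.

Lemma meas_const c : meas (fun _ => c).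
Proof.
  intro a. destruct (Rle_dec c a).
  - apply F_ext with (fun _ => True); [apply F_True | tauto].
  - apply F_ext with (fun _ => False); [apply F_False | tauto].
Qed.

Lemma meas_lt X a : meas X -> F (fun w => X w < a).
Proof.
  intros H. apply F_ext with (fun w => exists n : nat, X w <= a - / INR (S n)).
  - apply F_cunion; intro; apply H.
  - intro w; split.
    + intros [n Hn]. pose proof (inv_INR_S_pos n). lra.
    + intro Hw. destruct (exists_inv_INR_S_lt (a - X w)) as [n Hn]; [lra|].
      exists n. lra.
Qed.

Lemma meas_ge X a : meas X -> F (fun w => a <= X w).
Proof. intros H. apply F_ext with (fun w => ~ X w < a); [apply F_compl, meas_lt, H | intro; lra]. Qed.

Lemma meas_of_lt X : (forall a, F (fun w => X w < a)) -> meas X.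
Proof.
  intros H a. apply F_ext with (fun w => forall n : nat, X w < a + / INR (S n)).
  - apply F_cinter; intro; apply H.
  - intro w; split.
    + intro Hw. apply Rnot_lt_le. intro Ha.
      destruct (exists_inv_INR_S_lt (X w - a)) as [n Hn]; [lra|].
      specialize (Hw n). lra.
    + intros Hw n. pose proof (inv_INR_S_pos n). lra.
Qed.

Lemma meas_opp X : meas X -> meas (fun w => - X w).
Proof. intros H a. apply F_ext with (fun w => - a <= X w); [apply meas_ge, H | intro; lra]. Qed.

Lemma meas_scal_pos c X : 0 < c -> meas X -> meas (fun w => c * X w).
Proof.
  intros Hc H a. apply F_ext with (fun w => X w <= a / c); [apply H|].
  intro w. assert (E : c * (a / c) = a) by (field; lra).
  split; intro Hw.
  - rewrite <- E. apply Rmult_le_compat_l; lra.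
  - apply Rmult_le_reg_l with c; [exact Hc | now rewrite E].
Qed.

Lemma meas_scal c X : meas X -> meas (fun w => c * X w).
Proof.
  intros H. destruct (Rtotal_order c 0) as [Hc|[Hc|Hc]].
  - apply meas_ext with (fun w => - ((- c) * X w)); [|intro; ring].
    apply meas_opp, meas_scal_pos; [lra | exact H].
  - apply meas_ext with (fun _ => 0); [apply meas_const | intro; subst; ring].
  - now apply meas_scal_pos.
Qed.

(* [X + Y < b] iff some rational [q] has [X < q] and [Y < b - q]. *)
Lemma meas_plus X Y : meas X -> meas Y -> meas (fun w => X w + Y w).
Proof.
  intros HX HY. apply meas_of_lt. intro b.
  apply F_ext with (fun w => exists (j : nat) (z : Z),
    X w < IZR z / INR (S j) /\ Y w < b - IZR z / INR (S j)).
  - apply F_cunion; intro j. apply F_Zunion; intro z.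
    apply F_inter; apply meas_lt; auto.
  - intro w; split.
    + intros [j [z Hjz]]. lra.
    + intro Hw. destruct (exists_ratio_between (X w) (b - X w - Y w)) as [j [z Hjz]]; [lra|].
      exists j, z. lra.
Qed.

Lemma meas_minus X Y : meas X -> meas Y -> meas (fun w => X w - Y w).
Proof. intros; apply meas_plus; auto using meas_opp. Qed.

Lemma meas_sq X : meas X -> meas (fun w => X w * X w).
Proof.
  intros H a. destruct (Rlt_dec a 0).
  - apply F_ext with (fun _ => False); [apply F_False|]. intro w; split; [tauto | intro; nra].
  - apply F_ext with (fun w => X w <= sqrt a /\ - sqrt a <= X w).
    + apply F_inter; [apply H | apply meas_ge, H].
    + pose proof (sqrt_sqrt a) as Hs. pose proof (sqrt_pos a).
      intro w; split; intro Hw; [nra|].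
      split; apply Rnot_lt_le; intro; nra.
Qed.

Lemma meas_mult X Y : meas X -> meas Y -> meas (fun w => X w * Y w).
Proof.
  intros HX HY.
  apply meas_ext with
    (fun w => / 4 * ((X w + Y w) * (X w + Y w) - (X w - Y w) * (X w - Y w))); [|intro; field].
  apply meas_scal, meas_minus; apply meas_sq; auto using meas_plus, meas_minus.
Qed.

Lemma meas_abs X : meas X -> meas (fun w => Rabs (X w)).
Proof.
  intros H a. apply F_ext with (fun w => X w <= a /\ - a <= X w).
  - apply F_inter; [apply H | apply meas_ge, H].
  - intro w; unfold Rabs; destruct Rcase_abs; lra.
Qed.

Lemma meas_inv X : meas X -> (forall w, 1 <= X w) -> meas (fun w => / X w).
Proof.
  intros H H1 a. destruct (Rle_dec a 0).
  - apply F_ext with (fun _ => False); [apply F_False|].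
    intro w; split; [tauto|]. pose proof (Rinv_0_lt_compat (X w) ltac:(specialize (H1 w); lra)). lra.
  - apply F_ext with (fun w => / a <= X w); [apply meas_ge, H|].
    intro w. specialize (H1 w).
    split; intro Hw.
    + rewrite <- (Rinv_inv a). apply Rinv_le_contravar; [apply Rinv_0_lt_compat; lra | exact Hw].
    + rewrite <- (Rinv_inv (X w)). apply Rinv_le_contravar; [apply Rinv_0_lt_compat; lra | exact Hw].
Qed.

Lemma meas_fsum m (g : nat -> Omega -> R) :
  (forall n, (n < m)%nat -> meas (g n)) -> meas (fun w => fsum m (fun n => g n w)).
Proof.
  induction m as [|m IH]; intro H; simpl.
  - apply meas_const.
  - apply meas_plus; [apply IH; intros; apply H | apply H]; lia.
Qed.


Section Probability.
Variable P : (Omega -> Prop) -> R.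
Hypothesis HP : is_prob_space Omega F P.

Lemma P_ext A B : (forall w, A w <-> B w) -> P A = P B.
Proof. intros E; now rewrite (pred_ext _ A B E). Qed.

Lemma P_nonneg A : F A -> 0 <= P A.
Proof. apply HP. Qed.

Lemma P_cadd (A : nat -> Omega -> Prop) : (forall n, F (A n)) ->
  (forall n m w, n <> m -> A n w -> A m w -> False) ->
  infinite_sum (fun n => P (A n)) (P (fun w => exists n, A n w)).
Proof. apply HP. Qed.

Lemma P_False : P (fun _ => False) = 0.
Proof.
  apply infinite_sum_const_eq0 with (P (fun w => exists _ : nat, False)).
  apply (P_cadd (fun _ _ => False)); [intro; apply F_False | tauto].
Qed.

Lemma P_add A B : F A -> F B -> (forall w, A w -> B w -> False) ->
  P (fun w => A w \/ B w) = P A + P B.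
Proof.
  intros HA HB Hd.
  set (u := fun n : nat => match n with O => A | 1%nat => B | _ => fun _ => False end).
  assert (Hu : infinite_sum (fun n => P (u n)) (P (fun w => exists n, u n w))).
  { apply P_cadd.
    - intros [|[|n]]; simpl; [exact HA | exact HB | apply F_False].
    - intros [|[|n]] [|[|m]] w Hnm; simpl; try tauto; intros; eauto. }
  rewrite (P_ext _ (fun w => exists n, u n w)).
  - apply (uniqueness_sum _ _ _ Hu). apply infinite_sum_eventually with 1%nat.
    intros [|n] Hn; [lia|]. clear Hn. induction n as [|n IH]; simpl in *.
    + ring.
    + rewrite IH, P_False. ring.
  - intro w; split.
    + intros [Hw|Hw]; [exists O | exists 1%nat]; exact Hw.
    + intros [[|[|n]] Hw]; simpl in Hw; tauto.
Qed.

Lemma P_mono A B : F A -> F B -> (forall w, A w -> B w) -> P A <= P B.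
Proof.
  intros HA HB Hs.
  rewrite (P_ext B (fun w => A w \/ (B w /\ ~ A w))).
  - pose proof (F_diff _ _ HB HA) as HBA.
    rewrite P_add; auto.
    + pose proof (P_nonneg _ HBA). lra.
    + intros w Hw [_ Hw']; auto.
  - intro w; split; [|intros [Hw|[Hw _]]; auto].
    intro Hw; destruct (classic (A w)); auto.
Qed.

(* Disjointify: [D n = N n \ (N 0 \/ ... \/ N (n-1))]. *)
Lemma null_cunion (N : nat -> Omega -> Prop) : (forall n, F (N n) /\ P (N n) = 0) ->
  F (fun w => exists n, N n w) /\ P (fun w => exists n, N n w) = 0.
Proof.
  intros H. split; [apply F_cunion; intro n; apply H|].
  set (D := fun n w => N n w /\ ~ (exists k, (k < n)%nat /\ N k w)).
  assert (FD : forall n, F (D n)).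
  { intro n. apply F_diff; [apply H|]. apply F_cunion. intro k.
    destruct (Compare_dec.lt_dec k n).
    - apply F_ext with (N k); [apply H | intro; tauto].
    - apply F_ext with (fun _ => False); [apply F_False | intro; tauto]. }
  assert (PD : forall n, P (D n) = 0).
  { intro n. destruct (H n) as [HNn PNn].
    pose proof (P_nonneg _ (FD n)).
    pose proof (P_mono (D n) (N n) (FD n) HNn (fun w Hw => proj1 Hw)). lra. }
  assert (HD : infinite_sum (fun n => P (D n)) (P (fun w => exists n, D n w))).
  { apply P_cadd; [exact FD|]. intros n m w Hnm [Hn Hn'] [Hm Hm'].
    destruct (Compare_dec.lt_dec n m); [apply Hm' | apply Hn'; exists m; split; [lia|]]; eauto. }
  rewrite (P_ext _ (fun w => exists n, D n w)).
  - apply (uniqueness_sum _ _ _ HD). apply infinite_sum_eventually with O.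
    intros n _. induction n as [|n IH]; simpl; rewrite PD; [|rewrite IH]; ring.
  - intro w; split; [|intros [n [Hn _]]; eauto].
    intros [n Hn]. induction n as [n IH] using (well_founded_induction Wf_nat.lt_wf).
    destruct (classic (exists k, (k < n)%nat /\ N k w)) as [[k [Hk Hkw]]|Hnk].
    + exact (IH k Hk Hkw).
    + exists n. split; assumption.
Qed.

Local Notation ae := (ae Omega F P).

Lemma ae_true (Q : Omega -> Prop) : (forall w, Q w) -> ae Q.
Proof. intros H. exists (fun _ => False). split; [apply F_False | split; [apply P_False | auto]]. Qed.

Lemma ae_mono (Q Q' : Omega -> Prop) : ae Q -> (forall w, Q w -> Q' w) -> ae Q'.
Proof. intros [N [HN [PN HQ]]] H. exists N; auto. Qed.

Lemma ae_all (Q : nat -> Omega -> Prop) : (forall n, ae (Q n)) -> ae (fun w => forall n, Q n w).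
Proof.
  intros H. destruct (choice (fun n N => F N /\ P N = 0 /\ forall w, ~ N w -> Q n w) H)
    as [N HN].
  destruct (null_cunion N) as [FN PN]; [intro n; split; apply HN|].
  exists (fun w => exists n, N n w). repeat split; auto.
  intros w Hw n. apply (HN n). intro; apply Hw; eauto.
Qed.

Lemma ae_and (Q1 Q2 : Omega -> Prop) : ae Q1 -> ae Q2 -> ae (fun w => Q1 w /\ Q2 w).
Proof.
  intros H1 H2.
  apply ae_mono with (fun w => forall n : nat, match n with O => Q1 w | _ => Q2 w end).
  - apply ae_all. intros [|n]; auto.
  - intros w Hw; split; [apply (Hw O) | apply (Hw 1%nat)].
Qed.


Lemma supP_ge N z w k : In k N -> pk Omega k z w <= supP Omega N z w.
Proof.
  unfold supP. induction N as [|a N IH]; simpl; [tauto|].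
  intros [E|Hk]; [subst; apply Rmax_l | eapply Rle_trans; [apply IH, Hk | apply Rmax_r]].
Qed.

Lemma supP_ext N z z' w : (forall k, In k N -> z k w = z' k w) ->
  supP Omega N z w = supP Omega N z' w.
Proof.
  intros H. unfold supP. f_equal. apply map_ext_in. intros k Hk. unfold pk. now rewrite H.
Qed.

Lemma supP_seq_sub_self N y w : supP Omega N (seq_sub Omega y y) w = 0.
Proof.
  unfold supP. induction N as [|k N IH]; simpl; auto.
  rewrite IH. unfold pk, seq_sub. rewrite Rminus_diag, Rabs_R0. apply Rmax_left; lra.
Qed.

Local Notation in_E := (in_E Omega F).
Local Notation ae_eq := (ae_eq Omega F P).

Definition is_fsum_form (m : nat) (xs : nat -> Omega -> R)
  (f : (nat -> Omega -> R) -> Omega -> R) : Prop :=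
  forall y, in_E y -> ae_eq (f y) (fun w => fsum m (fun n => xs n w * y n w)).

Section FsumForm.
Variables (f : (nat -> Omega -> R) -> Omega -> R) (m : nat) (xs : nat -> Omega -> R).
Hypothesis Hrep : is_fsum_form m xs f.

Lemma fsum_form_L0_linear : L0_linear Omega F P f.
Proof.
  split.
  - intros r x Hr Hx.
    assert (Hrx : in_E (fun n w => r w * x n w)) by (intro n; apply meas_mult; auto).
    eapply ae_mono; [exact (ae_and _ _ (Hrep _ Hrx) (Hrep _ Hx))|]. intros w [E1 E2].
    rewrite E1, E2, <- fsum_scal. apply fsum_ext. intros; ring.
  - intros x y Hx Hy.
    assert (Hxy : in_E (fun n w => x n w + y n w)) by (intro n; apply meas_plus; auto).
    eapply ae_mono; [exact (ae_and _ _ (Hrep _ Hxy) (ae_and _ _ (Hrep _ Hx) (Hrep _ Hy)))|].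
    intros w [E1 [E2 E3]]. rewrite E1, E2, E3, <- fsum_plus. apply fsum_ext. intros; ring.
Qed.

Hypothesis Hf : is_map_E_L0 Omega F P f.
Hypothesis Hxs : forall n, (n < m)%nat -> meas (xs n).

Lemma fsum_form_continuous : continuous_T0 Omega F P f.
Proof.
  intros V HV y Hy Vy.
  destruct (HV (f y) (proj1 Hf y Hy) Vy) as [t [r0 [Ht [[Hr0 _] [Hball Hsub]]]]].
  set (S := fun w => fsum m (fun n => Rabs (xs n w))).
  assert (HS : forall w, 0 <= S w) by (intro; apply fsum_nonneg; intro; apply Rabs_pos).
  set (r := fun w => (r0 w - Rabs (f y w - t w)) / (1 + S w)).
  assert (Hr : ae (fun w => 0 < r w)).
  { eapply ae_mono; [exact Hball|]. intros w Hw.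
    apply Rdiv_lt_0_compat; [lra | specialize (HS w); lra]. }
  exists y, (seq 0 m), r. split; [exact Hy|]. split; [split|split].
  - apply meas_mult.
    + apply meas_minus; [exact Hr0 | apply meas_abs, meas_minus; [apply (proj1 Hf y Hy) | exact Ht]].
    + apply meas_inv; [|intro w; specialize (HS w); lra].
      apply meas_plus; [apply meas_const | apply meas_fsum; intros; apply meas_abs; auto].
  - exact Hr.
  - eapply ae_mono; [exact Hr|]. intros w Hw. now rewrite supP_seq_sub_self.
  - intros z Hz Hyz. apply Hsub; [apply (proj1 Hf z Hz)|].
    eapply ae_mono;
      [exact (ae_and _ _ Hyz (ae_and _ _ Hball (ae_and _ _ (Hrep _ Hy) (Hrep _ Hz))))|].
    intros w [Hw [Hbw [Ey Ez]]]. unfold r in Hw. rewrite Ey in Hbw, Hw. rewrite Ez.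
    apply fsum_mult_dist_lt with (b := fun n => y n w); [exact Hbw|].
    intros n Hn. apply Rlt_le. eapply Rle_lt_trans; [|exact Hw].
    apply (supP_ge (seq 0 m) (seq_sub Omega y z) w n), in_seq. lia.
Qed.

End FsumForm.

Definition seq_zero : nat -> Omega -> R := fun _ _ => 0.
Definition seq_unit (k : nat) : nat -> Omega -> R :=
  fun n _ => if Nat.eq_dec n k then 1 else 0.
Definition seq_below (j : nat) (y : nat -> Omega -> R) : nat -> Omega -> R :=
  fun n w => if Compare_dec.lt_dec n j then y n w else 0.
Definition seq_from (j : nat) (y : nat -> Omega -> R) : nat -> Omega -> R :=
  fun n w => if Compare_dec.lt_dec n j then 0 else y n w.

Lemma in_E_seq_zero : in_E seq_zero.
Proof. intro; apply meas_const. Qed.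

Lemma in_E_seq_unit k : in_E (seq_unit k).
Proof. intro; apply meas_const. Qed.

Lemma in_E_seq_below j y : in_E y -> in_E (seq_below j y).
Proof. intros Hy n. unfold seq_below. destruct Compare_dec.lt_dec; [apply Hy | apply meas_const]. Qed.

Lemma in_E_seq_from j y : in_E y -> in_E (seq_from j y).
Proof. intros Hy n. unfold seq_from. destruct Compare_dec.lt_dec; [apply meas_const | apply Hy]. Qed.

Lemma seq_below0 y : seq_below 0 y = seq_zero.
Proof.
  apply functional_extensionality; intro n; apply functional_extensionality; intro w.
  unfold seq_below. destruct Compare_dec.lt_dec; [lia | reflexivity].
Qed.

Lemma seq_belowS j y :
  seq_below (S j) y = fun n w => seq_below j y n w + y j w * seq_unit j n w.
Proof.
  apply functional_extensionality; intro n; apply functional_extensionality; intro w.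
  unfold seq_below, seq_unit.
  destruct (Nat.eq_dec n j); do 2 destruct Compare_dec.lt_dec; try lia; subst; ring.
Qed.

Lemma seq_below_from j y : (fun n w => seq_below j y n w + seq_from j y n w) = y.
Proof.
  apply functional_extensionality; intro n; apply functional_extensionality; intro w.
  unfold seq_below, seq_from. destruct Compare_dec.lt_dec; ring.
Qed.

Section Linear.
Variable f : (nat -> Omega -> R) -> Omega -> R.
Hypothesis Hlin : L0_linear Omega F P f.

Lemma L0_linear_seq_zero : ae (fun w => f seq_zero w = 0).
Proof.
  pose proof (proj1 Hlin (fun _ => 0) seq_zero (meas_const 0) in_E_seq_zero) as H.
  cbv beta in H.
  replace (fun (n : nat) (w : Omega) => 0 * seq_zero n w) with seq_zero in H.
  - eapply ae_mono; [exact H|]. intros w Hw. rewrite Hw. ring.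
  - apply functional_extensionality; intro n; apply functional_extensionality; intro w.
    unfold seq_zero; ring.
Qed.

Lemma L0_linear_seq_below y : in_E y -> forall j,
  ae (fun w => f (seq_below j y) w = fsum j (fun n => f (seq_unit n) w * y n w)).
Proof.
  intros Hy j. induction j as [|j IH].
  - rewrite seq_below0. exact L0_linear_seq_zero.
  - assert (Hyj : in_E (fun n w => y j w * seq_unit j n w))
      by (intro n; apply meas_mult; [apply Hy | apply in_E_seq_unit]).
    pose proof (proj2 Hlin _ _ (in_E_seq_below j y Hy) Hyj) as Hadd.
    pose proof (proj1 Hlin (y j) (seq_unit j) (Hy j) (in_E_seq_unit j)) as Hscal.
    rewrite <- seq_belowS in Hadd.
    eapply ae_mono; [exact (ae_and _ _ IH (ae_and _ _ Hadd Hscal))|].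
    intros w [E1 [E2 E3]]. simpl. rewrite E2, E1, E3. ring.
Qed.

Lemma L0_linear_continuous_vanish : continuous_T0 Omega F P f ->
  exists m, forall z, in_E z -> (forall n w, (n < m)%nat -> z n w = 0) ->
    ae (fun w => f z w = 0).
Proof.
  intros Hcont.
  set (V := fun u : Omega -> R => ae (fun w => Rabs (u w - 0) < 1)).
  assert (HV : openL Omega F P V).
  { intros s Hs Vs. exists (fun _ => 0), (fun _ => 1).
    split; [apply meas_const|]. split; [split; [apply meas_const | apply ae_true; intro; lra]|].
    split; [exact Vs | auto]. }
  assert (V0 : V (f seq_zero)).
  { eapply ae_mono; [exact L0_linear_seq_zero|]. intros w Hw. rewrite Hw, Rminus_diag, Rabs_R0. lra. }
  destruct (Hcont V HV seq_zero in_E_seq_zero V0) as [x [N [r [_ [_ [Hball0 Hsub]]]]]].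
  exists (S (list_max N)). intros z Hz Hz0.
  assert (Hscaled : forall j : nat, ae (fun w => Rabs (INR (S j) * f z w) < 1)).
  { intro j. set (c := INR (S j)).
    assert (Hcz : in_E (fun n w => c * z n w)) by (intro; apply meas_scal, Hz).
    assert (Hball : ballE Omega F P x N r (fun n w => c * z n w)).
    { eapply ae_mono; [exact Hball0|]. intros w Hw.
      cbv beta in *. rewrite (supP_ext N _ (seq_sub Omega x seq_zero) w); [exact Hw|]. intros k Hk. unfold seq_sub, seq_zero.
      rewrite Hz0; [ring|]. apply Nat.lt_succ_r.
      pose proof (proj1 (list_max_le N (list_max N)) (Nat.le_refl _)) as HN.
      rewrite Forall_forall in HN. auto. }
    eapply ae_mono; [exact (ae_and _ _ (Hsub _ Hcz Hball) (proj1 Hlin (fun _ => c) z (meas_const c) Hz))|].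
    intros w [Hw E]. rewrite E, Rminus_0_r in Hw. exact Hw. }
  eapply ae_mono; [exact (ae_all _ Hscaled)|]. intros w Hw. now apply eq0_of_scaled_lt1.
Qed.

End Linear.

Lemma in_Estar0_fsum_form f : is_map_E_L0 Omega F P f -> in_Estar0 Omega F P f ->
  exists m xs, (forall n, (n < m)%nat -> meas (xs n)) /\ is_fsum_form m xs f.
Proof.
  intros Hf [Hlin Hcont].
  destruct (L0_linear_continuous_vanish f Hlin Hcont) as [m Hvanish].
  exists m, (fun n => f (seq_unit n)). split.
  - intros n _. apply (proj1 Hf), in_E_seq_unit.
  - intros y Hy.
    pose proof (proj2 Hlin _ _ (in_E_seq_below m y Hy) (in_E_seq_from m y Hy)) as Hsplit.
    rewrite seq_below_from in Hsplit.
    assert (Htail : ae (fun w => f (seq_from m y) w = 0)).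
    { apply Hvanish; [apply in_E_seq_from, Hy|].
      intros n w Hn. unfold seq_from. destruct Compare_dec.lt_dec; [reflexivity | lia]. }
    eapply ae_mono; [exact (ae_and _ _ Hsplit (ae_and _ _ Htail (L0_linear_seq_below f Hlin y Hy m)))|].
    intros w [E1 [E2 E3]]. rewrite E1, E2, E3. ring.
Qed.
End Probability.
End SigmaAlgebra.

Theorem mainTheorem5 (Omega : Type) (F : (Omega -> Prop) -> Prop)
  (P : (Omega -> Prop) -> R) (HP : is_prob_space Omega F P)
  (f : (nat -> Omega -> R) -> Omega -> R) (Hf : is_map_E_L0 Omega F P f) :
  in_Estar0 Omega F P f <->
  exists (m : nat) (xs : nat -> Omega -> R),
    (forall n, (n < m)%nat -> measurable Omega F (xs n)) /\
    (forall y, in_E Omega F y ->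
       ae_eq Omega F P (f y) (fun w => fsum m (fun n => xs n w * y n w))).
Proof.
  pose proof (proj1 HP) as HF. split.
  - exact (in_Estar0_fsum_form Omega F HF P HP f Hf).
  - intros [m [xs [Hxs Hrep]]]. split.
    + exact (fsum_form_L0_linear Omega F HF P HP f m xs Hrep).
    + exact (fsum_form_continuous Omega F HF P HP f m xs Hrep Hf Hxs).
Qed.
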